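(* Let $\mathbbm{k}$ be an algebraically closed field of characteristic $0$, and let $\mathscr{A}_1$ be the connected cochain DG algebra whose underlying graded algebra is the free algebra $\mathscr{A}_1^{\#}=\mathbbm{k}\langle x_1,x_2,x_3\rangle$ with $|x_1|=|x_2|=|x_3|=1$, and whose differential is determined by $\partial(x_1)=x_3^2$, $\partial(x_2)=x_2^2$, $\partial(x_3)=0$ (extended by the graded Leibniz rule). Then the cohomology ring of $\mathscr{A}_1$ is $$H(\mathscr{A}_1)=\frac{\mathbbm{k}[\lceil x_3 \rceil, \lceil x_1x_3+x_3x_1 \rceil]}{( \lceil x_3\rceil^2 )},$$ i.e. it is the commutative algebra generated by the classes $\lceil x_3\rceil$ (degree $1$) and $\lceil x_1x_3+x_3x_1\rceil$ (degree $2$) subject only to $\lceil x_3\rceil^2=0$.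
   Context: A cochain DG algebra is a $\mathbb{Z}$-graded algebra $\mathscr{A}$ with a degree $1$ differential $\partial$ satisfying $\partial^2=0$ and $\partial(ab)=\partial(a)b+(-1)^{|a|}a\partial(b)$ for homogeneous $a,b$. For a cocycle $z$, $\lceil z\rceil$ denotes its cohomology class in $H(\mathscr{A})$. *)

From HB Require Import structures.
From mathcomp Require Import all_boot all_order all_algebra.
Set Implicit Arguments. Unset Strict Implicit. Unset Printing Implicit Defensive.
Import GRing.Theory.
Local Open Scope ring_scope.

(* The free graded algebra K<x1,x2,x3>, |xi| = 1.  Its degree-n component has
   the words of length n over {x1,x2,x3} as a basis; a homogeneous element of
   degree n is its coefficient function on words.  Letters are 'I_3:
   index 0 = x1, index 1 = x2, index 2 = x3. *)

Definition word (n : nat) := n.-tuple 'I_3.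

Section FreeDGA.
Variable K : fieldType.

Local Notation cochain n := {ffun word n -> K^o}.

Definition dga_mul m n (a : cochain m) (b : cochain n) : cochain (m + n) :=
  [ffun w : word (m + n) =>
     \sum_(u : word m) \sum_(v : word n)
        a u * b v * ((val w == val u ++ val v)%B)%:R].

Definition dga_one : cochain 0 := [ffun _ => 1].

Definition dga_gen (i : 'I_3) : cochain 1 := [ffun w : word 1 => ((val w == [:: i])%B)%:R].

Definition L1 : 'I_3 := @Ordinal 3 0 isT.
Definition L2 : 'I_3 := @Ordinal 3 1 isT.
Definition L3 : 'I_3 := @Ordinal 3 2 isT.

Definition x1 := dga_gen L1.
Definition x2 := dga_gen L2.
Definition x3 := dga_gen L3.

Definition dgen (i : 'I_3) : cochain 2 :=
  if i == L1 then dga_mul x3 x3 else if i == L2 then dga_mul x2 x2 else 0.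

(* the differential A^n -> A^(n+1), i.e. the graded Leibniz extension:
   d(u_0 ... u_{n-1}) = sum_j (-1)^j u_0..u_{j-1} d(u_j) u_{j+1}..u_{n-1},
   (each letter has degree 1), extended linearly. *)
Definition dga_d n (a : cochain n) : cochain n.+1 :=
  [ffun v : word n.+1 =>
     \sum_(u : word n) \sum_(j < n) \sum_(s : word 2)
        (-1) ^+ j * a u * dgen (tnth u j) s *
        ((val v == take j (val u) ++ val s ++ drop j.+1 (val u))%B)%:R].

Definition is_coboundary (n : nat) : cochain n -> Prop :=
  match n return cochain n -> Prop with
  | 0 => fun c => c = 0
  | n'.+1 => fun c => exists b : cochain n', dga_d b = c
  end.

Definition zz : cochain 2 := dga_mul x1 x3 + dga_mul x3 x1.

Fixpoint zpow (k : nat) : cochain k.*2 :=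
  match k return cochain k.*2 with
  | 0 => dga_one
  | k'.+1 => dga_mul zz (zpow k')
  end.

End FreeDGA.

Notation cochain K n := {ffun word n -> K^o}.

From HB Require Import structures.
From mathcomp Require Import all_boot all_order all_algebra.
From mathcomp Require Import ring zify.
Import GRing.Theory.
Local Open Scope ring_scope.

(* Since no letter has a differential containing x3 x1 (d x1 = x3^2,
   d x2 = x2^2), the restriction f |-> f(x3 x1 _) commutes with d: it is a
   chain map of degree -2 sending z^(k+1) to z^k and x3 z^(k+1) to x3 z^k.
   An explicit homotopy h, pairing x1 u with x3 x3 u and x2^(2i+1) u with
   x2^(2i+2) u, satisfies dh + hd = id on series vanishing on 1, on x3 and on
   all words beginning with x3 x1.  Hence if the restriction of a cocycle c is
   cohomologous to a z^k (by induction), then c - a z^(k+1) - d(x3 x1 t) is a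
   cocycle killed by the restriction, i.e. a coboundary.  The same induction
   reduces the nontriviality of [z^k] and [x3 z^k] to that of [1] and [x3]. *)

Lemma eq_cat_take_drop (T : eqType) (w u v : seq T) :
  (w == u ++ v) = (u == take (size u) w) && (v == drop (size u) w).
Proof.
apply/eqP/andP => [->|[/eqP eu /eqP ev]]; first by rewrite take_size_cat // drop_size_cat.
by rewrite -[w](cat_take_drop (size u)) -eu -ev.
Qed.

Lemma sum_tuple_delta (T : finType) (R : pzSemiRingType) m (G : seq T -> R) (s0 : seq T) :
  \sum_(t : m.-tuple T) G t * (val t == s0)%:R = if size s0 == m then G s0 else 0.
Proof.
case: ifP => hs.
- rewrite (bigD1 (Tuple hs)) //= eqxx mulr1 big1 ?addr0 // => t ht.
  suff -> : (val t == s0) = false by rewrite mulr0.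
  by apply/negbTE; apply: contra ht => /eqP e; apply/eqP/val_inj.
- rewrite big1 // => t _; suff -> : (val t == s0) = false by rewrite mulr0.
  by apply/negbTE/eqP => e; move: hs; rewrite -e size_tuple eqxx.
Qed.

Lemma splice_letter {T : eqType} (x0 l : T) {n} {u v S : seq T} {j} :
  size u = n -> size v = n.+1 -> (j < n)%N -> size S = 2%N ->
  (nth x0 u j == l) && (v == take j u ++ S ++ drop j.+1 u) =
  (take 2 (drop j v) == S) && (u == take j v ++ l :: drop j.+2 v).
Proof.
move=> hu hv hj hS; apply/andP/andP => [[/eqP hl /eqP ->]|[/eqP hS' /eqP ->]].
- have htk : size (take j u) = j by rewrite size_take hu hj.
  split; first by rewrite drop_size_cat // take_size_cat.
  rewrite take_size_cat // catA drop_size_cat ?size_cat ?htk ?hS ?addn2 //.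
  by rewrite -hl -drop_nth ?hu // cat_take_drop.
- have htk : size (take j v) = j by rewrite size_take hv ltnS (ltnW hj).
  split; first by rewrite nth_cat htk ltnn subnn.
  rewrite take_size_cat // -(add1n j) -drop_drop drop_size_cat //= drop0.
  by rewrite -hS' -(add2n j) -drop_drop !cat_take_drop.
Qed.

Lemma ord3_cases (l : 'I_3) : l = L1 \/ l = L2 \/ l = L3.
Proof.
by case: l => [[|[|[|//]]] p]; [left | right; left | right; right]; apply: val_inj.
Qed.

Section FreeDGACohomology.
Variable K : fieldType.
Local Notation series := (seq 'I_3 -> K).

Ltac simp01 := rewrite /= ?(mul0r, mul1r, mulr0, mulr1, add0r, addr0, subr0,
  sub0r, oppr0, opprK, andbT, andbF, mulr0n, mulr1n).

Definition coef {n} (a : cochain K n) : series :=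
  fun s => if insub s is Some t then a t else 0.

Lemma coef_tuple {n} (a : cochain K n) (t : word n) : coef a (val t) = a t.
Proof. by rewrite /coef valK. Qed.

Lemma coef_eq0 {n} (a : cochain K n) s : size s != n -> coef a s = 0.
Proof. by move=> h; rewrite /coef insubN. Qed.

Lemma coef_inj {n} (a b : cochain K n) : coef a =1 coef b -> a = b.
Proof. by move=> h; apply/ffunP => t; rewrite -!coef_tuple h. Qed.

Lemma coef0 {n} s : coef (0 : cochain K n) s = 0.
Proof. by rewrite /coef; case: insub => // t; rewrite ffunE. Qed.

Lemma coefD {n} (a b : cochain K n) s : coef (a + b) s = coef a s + coef b s.
Proof. by rewrite /coef; case: insub => [t|]; rewrite ?ffunE ?addr0. Qed.

Lemma coefB {n} (a b : cochain K n) s : coef (a - b) s = coef a s - coef b s.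
Proof. by rewrite /coef; case: insub => [t|]; rewrite ?ffunE ?subr0. Qed.

Lemma coefZ {n} (a : cochain K n) c s : coef (c *: a) s = c * coef a s.
Proof. by rewrite /coef; case: insub => [t|]; rewrite ?ffunE ?mulr0. Qed.

Lemma coef_mul {m n} (a : cochain K m) (b : cochain K n) w :
  coef (dga_mul a b) w = coef a (take m w) * coef b (drop m w).
Proof.
have [/eqP hw|hw] := boolP (size w == (m + n)%N); last first.
  rewrite coef_eq0 //; have [h|h] := ltnP (size w) m.
    by rewrite coef_eq0 ?mul0r // take_oversize ?(ltnW h) // ltn_eqF.
  rewrite [coef b _]coef_eq0 ?mulr0 // size_drop.
  by apply: contra hw => /eqP <-; rewrite subnKC.
rewrite -[w]/(val (Tuple (introT eqP hw))) coef_tuple /dga_mul ffunE /=.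
have split_uv (u : word m) (v : word n) :
    a u * b v * (w == val u ++ val v)%:R =
    (coef a (val u) * (val u == take m w)%:R) * (coef b (val v) * (val v == drop m w)%:R).
  by rewrite eq_cat_take_drop size_tuple -mulnb natrM !coef_tuple mulrACA.
under eq_bigr => u _ do under eq_bigr => v _ do rewrite split_uv.
under eq_bigr => u _ do rewrite -mulr_sumr (sum_tuple_delta _ _ n (coef b)).
rewrite -mulr_suml (sum_tuple_delta _ _ m (coef a)) size_drop hw addKn eqxx.
by rewrite size_takel ?hw ?leq_addr // eqxx.
Qed.

Lemma coef_gen i s : coef (dga_gen K i) s = (s == [:: i])%:R.
Proof.
have [hs|hs] := boolP (size s == 1%N); first by rewrite -[s]/(val (Tuple hs)) coef_tuple ffunE.
by rewrite coef_eq0 //; case: eqP => // e; rewrite e in hs.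
Qed.

Lemma coef_mul_gen i j s :
  coef (dga_mul (dga_gen K i) (dga_gen K j)) s = (s == [:: i; j])%:R.
Proof.
rewrite coef_mul !coef_gen; case: s => [|l s] /=; first by rewrite mul0r.
by rewrite drop0 !eqseq_cons take0 eqxx andbT -natrM mulnb.
Qed.

Lemma coef_dgen l s : coef (dgen K l) s =
  (l == L1)%:R * (s == [:: L3; L3])%:R + (l == L2)%:R * (s == [:: L2; L2])%:R.
Proof.
rewrite /dgen; have [->|[->|->]] := ord3_cases l; simp01; try exact: coef_mul_gen.
by rewrite coef0.
Qed.

Definition lquot (l : 'I_3) (f : series) : series := fun u => f (l :: u).

Definition dfirst (f : series) (w : seq 'I_3) : K :=
  if w is l1 :: l2 :: u then
    ((l1 == L3) && (l2 == L3))%:R * f (L1 :: u) + ((l1 == L2) && (l2 == L2))%:R * f (L2 :: u)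
  else 0.

(* [dcoef w f] is the coefficient of [w] in [d f]: either the first two letters
   of [w] are [d] of a first letter, or the first letter is kept and [d] acts
   on the rest, with a sign [-1]. *)
Fixpoint dcoef (w : seq 'I_3) (f : series) : K :=
  if w is l :: t then dfirst f w - dcoef t (lquot l f) else 0.

Definition cocycle (f : series) := forall w, dcoef w f = 0.

Definition homog (f : series) m := forall s, size s != m -> f s = 0.

Lemma homog_coef {n} (a : cochain K n) : homog (coef a) n.
Proof. by move=> s; apply: coef_eq0. Qed.

Lemma dcoef_cons l t f : dcoef (l :: t) f = dfirst f (l :: t) - dcoef t (lquot l f).
Proof. by []. Qed.

Lemma dcoef_sum w f :
  dcoef w f = \sum_(j < size w) (-1) ^+ j * dfirst (fun u => f (take j w ++ u)) (drop j w).
Proof.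
elim: w f => [|l t IH] f; first by rewrite big_ord0.
rewrite dcoef_cons IH big_ord_recl expr0 mul1r -sumrN; congr (_ + _).
by apply: eq_bigr => j _; rewrite lift0 exprS mulN1r mulNr.
Qed.

Lemma sum_dgen (c : K) (l : 'I_3) (P : series) :
  \sum_(s : word 2) c * coef (dgen K l) (val s) * P (val s) =
  c * ((l == L1)%:R * P [:: L3; L3] + (l == L2)%:R * P [:: L2; L2]).
Proof.
pose P1 x := c * (l == L1)%:R * P x.
pose P2 x := c * (l == L2)%:R * P x.
rewrite (eq_bigr (fun s : word 2 =>
   P1 (val s) * (val s == [:: L3; L3])%:R + P2 (val s) * (val s == [:: L2; L2])%:R));
  last by move=> s _; rewrite coef_dgen /P1 /P2; ring.
by rewrite big_split !sum_tuple_delta /P1 /P2 /=; ring.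
Qed.

Lemma sum_splice {n} (j : 'I_n) (G : series) {v} : size v = n.+1 ->
  \sum_(u : word n) (-1) ^+ j * G (val u) *
     ((tnth u j == L1)%:R * (v == take j u ++ [:: L3; L3] ++ drop j.+1 u)%:R +
      (tnth u j == L2)%:R * (v == take j u ++ [:: L2; L2] ++ drop j.+1 u)%:R)
  = (-1) ^+ j * dfirst (fun w => G (take j v ++ w)) (drop j v).
Proof.
move=> hv; have hj := ltn_ord j.
under eq_bigr => u _ do rewrite (tnth_nth L1) -!natrM !mulnb
   !(splice_letter L1 _ (size_tuple u) hv hj) // -!mulnb !natrM.
set s1 := take j v ++ L1 :: drop j.+2 v.
set s2 := take j v ++ L2 :: drop j.+2 v.
pose G1 x := (-1) ^+ j * G x * (take 2 (drop j v) == [:: L3; L3])%:R.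
pose G2 x := (-1) ^+ j * G x * (take 2 (drop j v) == [:: L2; L2])%:R.
rewrite (eq_bigr (fun u : word n =>
    G1 (val u) * (val u == s1)%:R + G2 (val u) * (val u == s2)%:R)); last by move=> u _; rewrite /G1 /G2; ring.
have hsz l : size (take j v ++ l :: drop j.+2 v) = n.
  by rewrite size_cat /= size_drop size_take hv ltnS (ltnW hj); lia.
rewrite big_split !sum_tuple_delta /s1 /s2 !hsz eqxx /G1 /G2.
have -> : drop j v = nth L1 v j :: nth L1 v j.+1 :: drop j.+2 v.
  by rewrite (drop_nth L1) ?hv ?ltnS ?(ltnW hj) // (drop_nth L1) // hv ltnS.
rewrite /dfirst /= !eqseq_cons take0 eqxx !andbT; ring.
Qed.

Lemma dcoef_local w (f g : series) :
  (forall s, size s = (size w).-1 -> f s = g s) -> dcoef w f = dcoef w g.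
Proof.
elim: w f g => [|l t IH] f g e //; case: t IH e => [|l2 u] IH e //.
rewrite !(dcoef_cons l) (IH (lquot l f) (lquot l g)) => [|s hs].
  by rewrite /dfirst !e.
by apply: e; rewrite /= hs.
Qed.

Lemma eq_dcoef w {f g : series} : f =1 g -> dcoef w f = dcoef w g.
Proof. by move=> e; apply: dcoef_local => s _. Qed.

Lemma dcoef0 w : dcoef w (fun _ => 0) = 0.
Proof.
elim: w => [|l t IH] //; rewrite dcoef_cons IH subr0.
by case: t IH => [|l2 u] _ //; rewrite /dfirst !mulr0 addr0.
Qed.

Lemma dcoef_homog {w : seq 'I_3} {f : series} {m : nat} :
  homog f m -> size w != m.+1 -> dcoef w f = 0.
Proof.
case: w => [|l t] // hf hw; rewrite -(dcoef0 (l :: t)).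
by apply: dcoef_local => s hs; apply: hf; rewrite hs.
Qed.

Lemma coef_d n (a : cochain K n) v : coef (dga_d a) v = dcoef v (coef a).
Proof.
have [/eqP hv|hv] := boolP (size v == n.+1); last first.
  by rewrite coef_eq0 // (dcoef_homog (homog_coef a)).
rewrite -[v]/(val (Tuple (introT eqP hv))) coef_tuple /dga_d ffunE dcoef_sum /=.
rewrite hv big_ord_recr /=.
have -> : dfirst (fun w => coef a (take n v ++ w)) (drop n v) = 0.
  have : size (drop n v) = 1%N by rewrite size_drop hv subSnn.
  by case: (drop n v) => [|? []].
rewrite mulr0 addr0 exchange_big /=; apply: eq_bigr => j _.
rewrite -(sum_splice j (coef a) hv); apply: eq_bigr => u _.
under eq_bigr => s _ do rewrite -(coef_tuple a u) -(coef_tuple (dgen K (tnth u j)) s).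
exact: (sum_dgen _ (tnth u j) (fun x => (v == take j (val u) ++ x ++ drop j.+1 (val u))%:R)).
Qed.

Lemma dcoef_lin w (f g : series) c :
  dcoef w (fun u => c * f u + g u) = c * dcoef w f + dcoef w g.
Proof.
elim: w f g => [|l t IH] f g; first by rewrite mulr0 addr0.
rewrite !dcoef_cons (IH (lquot l f) (lquot l g)).
by case: t IH => [|l2 u] _; rewrite /dfirst /=; ring.
Qed.

Lemma dcoefZ w (f : series) c : dcoef w (fun u => c * f u) = c * dcoef w f.
Proof.
by rewrite -[RHS]addr0 -(dcoef0 w) -dcoef_lin; apply: eq_dcoef => u; rewrite addr0.
Qed.

Lemma dcoefD w (f g : series) : dcoef w (fun u => f u + g u) = dcoef w f + dcoef w g.
Proof. by rewrite -[dcoef w f]mul1r -dcoef_lin; apply: eq_dcoef => u; rewrite mul1r. Qed.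

Lemma dcoefN w (f : series) : dcoef w (fun u => - f u) = - dcoef w f.
Proof. by rewrite -mulN1r -dcoefZ; apply: eq_dcoef => u; rewrite mulN1r. Qed.

Lemma dcoefB w (f g : series) : dcoef w (fun u => f u - g u) = dcoef w f - dcoef w g.
Proof. by rewrite dcoefD dcoefN. Qed.

Lemma dcoef_31 v f : dcoef [:: L3, L1 & v] f = dcoef v (lquot L1 (lquot L3 f)).
Proof. by rewrite !dcoef_cons; case: v => [|x v]; rewrite /dfirst /=; simp01. Qed.

Lemma cocycle_dcoef f : cocycle (fun u => dcoef u f).
Proof.
move=> w; elim: w f => [|l1 t IH] f //.
rewrite dcoef_cons (eq_dcoef t (g := fun u => dfirst f (l1 :: u) - dcoef u (lquot l1 f))) //.
rewrite dcoefB IH subr0; case: t IH => [|l2 u] _; first by rewrite /dfirst subr0.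
pose g u := ((l1 == L3) && (l2 == L3))%:R * lquot L1 f u +
            ((l1 == L2) && (l2 == L2))%:R * lquot L2 f u.
rewrite dcoef_cons (eq_dcoef u (g := g)) // dcoefD !dcoefZ /dfirst !dcoef_cons /dfirst /g.
by case: u => [|x u]; have [->|[->|->]] := ord3_cases l1; have [->|[->|->]] := ord3_cases l2;
  rewrite /= /lquot; ring.
Qed.

Definition starts2 (w : seq 'I_3) := if w is x :: _ then x == L2 else false.

Fixpoint run2 (w : seq 'I_3) : nat :=
  if w is l :: w' then (if l == L2 then (run2 w').+1 else 0) else 0.

Lemma run2_nseq m t : ~~ starts2 t -> run2 (nseq m L2 ++ t) = m.
Proof.
move=> ht; elim: m => [|m IH] /=; last by rewrite IH.
by case: t ht => [|x t] //= /negbTE ->.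
Qed.

Lemma run2_split u : u = nseq (run2 u) L2 ++ drop (run2 u) u /\ ~~ starts2 (drop (run2 u) u).
Proof.
by elim: u => [|l u [IH1 IH2]] //=; case: ifP => hl /=; rewrite ?hl // -IH1 (eqP hl).
Qed.

(* Inverts d x1 = x3 x3 on a leading x1 and d x2 = x2 x2 on a leading odd run
   of x2's; after a leading x3 it acts on the rest when that starts with x2. *)
Definition htpy (f : series) (w : seq 'I_3) : K :=
  match w with
  | l :: u =>
    if l == L1 then f [:: L3, L3 & u]
    else if l == L2 then (odd (run2 w))%:R * f (L2 :: w)
    else if starts2 u then - ((odd (run2 u))%:R * f [:: L3, L2 & u])
    else 0
  | [::] => 0
  end.

Lemma htpy_x1 f s : htpy f (L1 :: s) = f [:: L3, L3 & s].
Proof. by []. Qed.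

Lemma htpy_x2 f s : htpy f (L2 :: s) = (odd (run2 (L2 :: s)))%:R * f [:: L2, L2 & s].
Proof. by []. Qed.

Lemma htpy_x3x2 f s : htpy f [:: L3, L2 & s] = - htpy (lquot L3 f) (L2 :: s).
Proof. by []. Qed.

Lemma htpy_x3 f s : ~~ starts2 s -> htpy f (L3 :: s) = 0.
Proof. by rewrite /htpy /= => /negbTE ->. Qed.

Lemma htpy_nseq f {k t} : (0 < k)%N -> ~~ starts2 t ->
  htpy f (nseq k L2 ++ t) = (odd k)%:R * f (nseq k.+1 L2 ++ t).
Proof. by case: k => [|k] // _ ht; rewrite /= run2_nseq. Qed.

Lemma dfirst_x2 f s : dfirst f (L2 :: s) = (starts2 s)%:R * f (L2 :: behead s).
Proof. by case: s => [|x s]; rewrite /dfirst /=; simp01. Qed.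

Lemma dcoef_nseq {t} f m : ~~ starts2 t ->
  dcoef (nseq m L2 ++ t) f = (~~ odd m && (0 < m)%N)%:R * f (nseq m.-1 L2 ++ t)
     + (-1) ^+ m * dcoef t (fun u => f (nseq m L2 ++ u)).
Proof.
move=> ht; elim: m f => [|m IH] f; first by rewrite /= mul0r add0r mul1r.
rewrite [nseq m.+1 L2 ++ t]/= dcoef_cons IH dfirst_x2 exprS /lquot.
case: m {IH} => [|m] /=; first by rewrite (negbTE ht); simp01; ring.
by case: (odd m) => /=; simp01; ring.
Qed.

Lemma dcoef_nstarts2_local {t} {g g' : series} : ~~ starts2 t ->
  (forall u, ~~ starts2 u -> g u = g' u) -> dcoef t g = dcoef t g'.
Proof.
case: t => [|l1 t] // ht e.
rewrite !dcoef_cons (eq_dcoef t (f := lquot l1 g) (g := lquot l1 g')) => [|u]; last exact: e.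
by case: t ht => [|l2 w] /= ht //; rewrite /dfirst /= (negbTE ht) /= [g _]e; simp01.
Qed.

Lemma dcoef_x2_local t (g g' : series) : (forall u, g (L2 :: u) = g' (L2 :: u)) ->
  dcoef (L2 :: t) g = dcoef (L2 :: t) g'.
Proof.
move=> e; rewrite !dcoef_cons !dfirst_x2 e.
by rewrite (eq_dcoef t (f := lquot L2 g) (g := lquot L2 g')).
Qed.

Lemma homotopy_x2 f {u} : starts2 u -> dcoef u (htpy f) + htpy (fun v => dcoef v f) u = f u.
Proof.
move=> hu; have [e ht] := run2_split u.
set m := run2 u in e ht; set t := drop m u in e ht.
have hm : (0 < m)%N by move: hu; rewrite e; case: (m) => [|?] //=; rewrite (negbTE ht).
rewrite e (dcoef_nseq _ _ ht) (htpy_nseq _ hm ht) (dcoef_nseq _ _ ht).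
rewrite (dcoef_nstarts2_local (g' := fun v => (odd m)%:R * f (nseq m.+1 L2 ++ v))) //;
  last first.
  by move=> v hv; rewrite htpy_nseq.
rewrite dcoefZ; case: (m) hm => [|[|k]] // _.
  by rewrite /= !expr1 !exprS; simp01; ring.
rewrite [k.+2.-1]/= [k.+3.-1]/= (htpy_nseq _ _ ht) // !exprS /=.
by case: (odd k) => /=; simp01; ring.
Qed.

Lemma homotopy_eq {f} : f [::] = 0 -> f [:: L3] = 0 -> (forall s, f [:: L3, L1 & s] = 0) ->
  forall w, dcoef w (htpy f) + htpy (fun v => dcoef v f) w = f w.
Proof.
move=> f0 f3 f31 [|l s]; first by rewrite /= add0r f0.
have [->|[->|->]] := ord3_cases l.
- rewrite htpy_x1 !dcoef_cons.
  rewrite (eq_dcoef s (f := lquot L1 (htpy f)) (g := lquot L3 (lquot L3 f))) //.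
  have -> : dfirst (lquot L3 f) (L3 :: s) = 0.
    by case: s => [|x s]; rewrite /dfirst /lquot /= ?f31; simp01.
  have -> : dfirst (htpy f) (L1 :: s) = 0 by case: s => [|x s]; rewrite /dfirst /=; simp01.
  by rewrite /dfirst /=; simp01; rewrite addrC addrK.
- by apply: homotopy_x2.
- case: s => [|x s]; first by rewrite /= subr0 add0r f3.
  have [->|[->|->]] := ord3_cases x.
  + rewrite dcoef_31 f31 htpy_x3 // addr0.
    by rewrite (eq_dcoef s (g := fun _ => 0)) ?dcoef0.
  + rewrite htpy_x3x2 dcoef_cons.
    have -> : dfirst (htpy f) [:: L3, L2 & s] = 0 by rewrite /dfirst /=; simp01.
    rewrite (@dcoef_x2_local _ _ (fun v => - htpy (lquot L3 f) v)) // dcoefN.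
    have -> : htpy (lquot L3 (fun v => dcoef v f)) (L2 :: s) =
              - htpy (fun v => dcoef v (lquot L3 f)) (L2 :: s).
      rewrite !htpy_x2 /lquot [dcoef (L3 :: _) f]dcoef_cons.
      have -> : dfirst f [:: L3, L2, L2 & s] = 0 by rewrite /dfirst /=; simp01.
      by rewrite sub0r mulrN.
    rewrite -[RHS](homotopy_x2 (lquot L3 f) (u := L2 :: s)) //; ring.
  + rewrite htpy_x3 // dcoef_cons addr0.
    rewrite (dcoef_nstarts2_local (g' := fun _ => 0)) ?dcoef0 ?subr0 //; last first.
      by move=> u hu; rewrite /lquot htpy_x3.
    by rewrite /dfirst /=; simp01.
Qed.

Lemma htpy_eq0 {f} w : (forall v, f v = 0) -> htpy f w = 0.
Proof. by move=> h; case: w => [|l u] //=; rewrite !h; do ! case: ifP => _; simp01. Qed.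

Definition zcoef (w : seq 'I_3) : K := (w == [:: L1; L3])%:R + (w == [:: L3; L1])%:R.

Definition zser k := coef (zpow K k).
Definition x3zser k := coef (dga_mul (x3 K) (zpow K k)).

Lemma zser0 w : zser 0 w = (w == [::])%:R.
Proof.
case: w => [|l w]; last by rewrite /zser coef_eq0.
by rewrite -[[::]]/(val (@Tuple 0 'I_3 [::] isT)) /zser coef_tuple ffunE.
Qed.

Lemma zserS k w : zser k.+1 w = zcoef (take 2 w) * zser k (drop 2 w).
Proof. by rewrite /zcoef -!coef_mul_gen -coefD; exact: (coef_mul (zz K) (zpow K k)). Qed.

Lemma x3zserE k w : x3zser k w = (take 1 w == [:: L3])%:R * zser k (drop 1 w).
Proof. by rewrite /x3zser coef_mul coef_gen. Qed.

Lemma homog_zser k : homog (zser k) k.*2.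
Proof. exact: homog_coef. Qed.

Lemma homog_x3zser k : homog (x3zser k) k.*2.+1.
Proof. exact: homog_coef. Qed.

Lemma zser_31 k v : zser k.+1 [:: L3, L1 & v] = zser k v.
Proof. by rewrite zserS /= /zcoef !eqseq_cons take0 drop0; simp01. Qed.

Lemma x3zser_31 k v : x3zser k.+1 [:: L3, L1 & v] = x3zser k v.
Proof.
rewrite !x3zserE /= zserS; simp01.
case: v => [|x v] /=; first by rewrite /zcoef; simp01.
rewrite /zcoef !eqseq_cons eqxx.
by have [->|[->|->]] := ord3_cases x; simp01.
Qed.

Lemma cocycle_zmul {G} : cocycle G -> cocycle (fun u => zcoef (take 2 u) * G (drop 2 u)).
Proof.
move=> hG w; set F := fun u => _.
case: w => [|l1 [|l2 w]]; [by [] | by rewrite /= subr0 |].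
rewrite !dcoef_cons (eq_dcoef w (f := lquot l2 (lquot l1 F))
  (g := fun u => zcoef [:: l1; l2] * G u)) => [|u]; last by rewrite /lquot /F /= take0 drop0.
rewrite dcoefZ hG mulr0 subr0.
by case: w => [|x w]; have [->|[->|->]] := ord3_cases l1; have [->|[->|->]] := ord3_cases l2;
  try have [->|[->|->]] := ord3_cases x;
  rewrite /dfirst /F /lquot /zcoef /= ?take0 ?drop0; ring.
Qed.

Lemma cocycle_x3mul {G} :
  cocycle G -> cocycle (fun u => (take 1 u == [:: L3])%:R * G (drop 1 u)).
Proof.
move=> hG w; set F := fun u => _; case: w => [|l1 t] //.
rewrite dcoef_cons (eq_dcoef t (f := lquot l1 F) (g := fun u => (l1 == L3)%:R * G u));
  last by move=> u; rewrite /lquot /F /= take0 drop0 eqseq_cons andbT.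
by rewrite dcoefZ hG mulr0 subr0; case: t => [|l2 w] //; rewrite /dfirst /F /=; simp01.
Qed.

Lemma cocycle_zser k : cocycle (zser k).
Proof.
elim: k => [|k IH] w; last by rewrite (eq_dcoef w (zserS k)) (cocycle_zmul IH).
case: w => [|l [|l2 w]]; [by [] | by rewrite /= subr0 | exact: dcoef_homog (homog_zser 0) _].
Qed.

Lemma cocycle_x3zser k : cocycle (x3zser k).
Proof. by move=> w; rewrite (eq_dcoef w (x3zserE k)) (cocycle_x3mul (cocycle_zser k)). Qed.

(* No degree is imposed on [t]: [dcoef w t] only reads [t] on words of length
   [size w - 1] (see [dcoef_local]). *)
Definition cobound (c : series) := exists t : series, forall w, c w = dcoef w t.

Lemma eq_cobound {f g : series} : cobound f -> f =1 g -> cobound g.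
Proof. by move=> [t et] e; exists t => w; rewrite -e. Qed.

Lemma cobound_lin {f g : series} a :
  cobound f -> cobound g -> cobound (fun w => a * f w + g w).
Proof.
by move=> [t et] [t' et']; exists (fun w => a * t w + t' w) => w; rewrite dcoef_lin et et'.
Qed.

Lemma cobound_31 f : cobound f -> cobound (lquot L1 (lquot L3 f)).
Proof. by move=> [t et]; exists (lquot L1 (lquot L3 t)) => w; rewrite -dcoef_31 -et. Qed.

Lemma cobound_coef_unique {c R : series} {lam mu : K} : ~ cobound R ->
  cobound (fun w => c w - lam * R w) -> cobound (fun w => c w - mu * R w) -> lam = mu.
Proof.
move=> nR hlam hmu; case: (eqVneq lam mu) => // hne; rewrite -subr_eq0 in hne.
have c0 : cobound (fun _ => 0) by exists (fun _ => 0) => w; rewrite dcoef0.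
exfalso; apply: nR.
have := cobound_lin (lam - mu)^-1 (cobound_lin (-1) hlam hmu) c0.
by move/eq_cobound; apply => w; field.
Qed.

Definition lmul31 (t : series) : series := fun w =>
  if w is l1 :: l2 :: v then ((l1 == L3) && (l2 == L1))%:R * t v else 0.

Lemma cobound_lift {c R R' : series} {n} {lam : K} :
  homog c n.+2 -> cocycle c -> homog R' n.+2 -> cocycle R' ->
  (forall v, R' [:: L3, L1 & v] = R v) ->
  cobound (fun v => c [:: L3, L1 & v] - lam * R v) ->
  cobound (fun w => c w - lam * R' w).
Proof.
move=> hc dc hR dR hRR [t et].
pose e w := c w - lam * R' w - dcoef w (lmul31 t).
have de : cocycle e.
  by move=> w; rewrite /e !dcoefB dcoefZ dc dR cocycle_dcoef; simp01.
have e0 : e [::] = 0 by rewrite /e /= hc // hR //; simp01.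
have e3 : e [:: L3] = 0 by rewrite /e /= hc // hR //; simp01.
have e31 s : e [:: L3, L1 & s] = 0.
  rewrite /e dcoef_31 (eq_dcoef s (g := t)) => [|u]; last by rewrite /lquot /lmul31; simp01.
  by rewrite hRR -et subrr.
exists (fun w => lmul31 t w + htpy e w) => w.
have := homotopy_eq e0 e3 e31 w; rewrite (htpy_eq0 _ de) addr0 dcoefD => ->.
by rewrite /e; ring.
Qed.

Section Periodicity.
Variables (d : nat) (R : nat -> series).
Hypothesis homog_R : forall k, homog (R k) (d + k.*2)%N.
Hypothesis cocycle_R : forall k, cocycle (R k).
Hypothesis R_31 : forall k v, R k.+1 [:: L3, L1 & v] = R k v.

Lemma cohomologous_multiple :
  (forall c, homog c d -> cocycle c -> exists lam, cobound (fun w => c w - lam * R 0 w)) ->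
  forall k c, homog c (d + k.*2)%N -> cocycle c ->
  exists lam, cobound (fun w => c w - lam * R k w).
Proof.
move=> base; elim=> [|k IH] c hc dc; first by rewrite double0 addn0 in hc; apply: base.
rewrite doubleS !addnS in hc.
have [lam hlam] : exists lam, cobound (fun w => lquot L1 (lquot L3 c) w - lam * R k w).
  by apply: IH => [s hs|w]; [exact: hc [:: L3, L1 & s] hs | rewrite -dcoef_31].
exists lam; apply: (cobound_lift hc dc _ (cocycle_R k.+1) (R_31 k) hlam).
by move=> s; rewrite -!addnS -doubleS; apply: homog_R.
Qed.

Lemma not_cobound_all : ~ cobound (R 0) -> forall k, ~ cobound (R k).
Proof.
move=> h0; elim=> // k IH /cobound_31 hk; apply: IH.
by refine (eq_cobound hk _) => v; rewrite /lquot R_31.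
Qed.

End Periodicity.

Lemma cohomologous_multiple0 c :
  homog c 0 -> exists lam, cobound (fun w => c w - lam * zser 0 w).
Proof.
move=> hc; exists (c [::]), (fun _ => 0) => w; rewrite dcoef0 zser0.
by case: w => [|l w]; rewrite /= ?mulr1 ?subrr // hc // mulr0 subr0.
Qed.

Lemma cohomologous_multiple1 c : homog c 1 -> cocycle c ->
  exists lam, cobound (fun w => c w - lam * x3zser 0 w).
Proof.
move=> hc dc.
have c1 : c [:: L1] = 0 by have := dc [:: L3; L3]; rewrite /= /dfirst /=; simp01.
have c2 : c [:: L2] = 0 by have := dc [:: L2; L2]; rewrite /= /dfirst /=; simp01.
exists (c [:: L3]), (fun _ => 0) => w; rewrite dcoef0 x3zserE.
case: w => [|l [|x w]]; rewrite /= ?zser0 /=.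
- by rewrite hc //; simp01.
- by have [->|[->|->]] := ord3_cases l; simp01; rewrite ?c1 ?c2 ?subrr.
- by rewrite hc //; simp01.
Qed.

Lemma not_cobound_zser0 : ~ cobound (zser 0).
Proof. by case=> t /(_ [::]); rewrite zser0 /= => /eqP; rewrite oner_eq0. Qed.

Lemma not_cobound_x3zser0 : ~ cobound (x3zser 0).
Proof.
by case=> t /(_ [:: L3]); rewrite x3zserE zser0 /=; simp01 => /eqP; rewrite oner_eq0.
Qed.

Lemma coboundaryE n (c : cochain K n) : is_coboundary c <-> cobound (coef c).
Proof.
case: n c => [|n] c /=.
  split => [->|[t et]]; first by exists (fun _ => 0) => w; rewrite coef0 dcoef0.
  apply: coef_inj => -[|l w]; first by rewrite et coef0.
  by rewrite !coef_eq0.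
split => [[b <-]|[t et]]; first by exists (coef b) => w; rewrite coef_d.
exists [ffun u : word n => t (val u)]; apply: coef_inj => w.
have [/eqP hw|hw] := boolP (size w == n.+1); last by rewrite !coef_eq0.
rewrite coef_d et; apply: dcoef_local => s; rewrite hw /= => /eqP hs.
by rewrite -[s]/(val (Tuple hs)) coef_tuple ffunE.
Qed.

Lemma cocycleE n (c : cochain K n) : dga_d c = 0 <-> cocycle (coef c).
Proof.
split => [dc w|dc]; first by rewrite -coef_d dc coef0.
by apply: coef_inj => w; rewrite coef_d dc coef0.
Qed.

Lemma exists_unique_class n (c r : cochain K n) : ~ cobound (coef r) ->
  (exists lam, cobound (fun w => coef c w - lam * coef r w)) ->
  exists! lam, is_coboundary (c - lam *: r).
Proof.
move=> nr [lam hlam].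
have E mu : is_coboundary (c - mu *: r) <-> cobound (fun w => coef c w - mu * coef r w).
  have e w : coef (c - mu *: r) w = coef c w - mu * coef r w by rewrite coefB coefZ.
  split => [/coboundaryE h|h]; first exact: eq_cobound h e.
  by apply/coboundaryE; apply: eq_cobound h (fun w => esym (e w)).
exists lam; split => [|mu /E hmu]; first exact/E.
exact: cobound_coef_unique nr hlam hmu.
Qed.

Lemma coef_x3 w : coef (x3 K) w = x3zser 0 w.
Proof.
rewrite coef_gen x3zserE zser0.
by case: w => [|l [|x w]] /=; rewrite ?mulr1 ?mulr0 ?mul0r //; case: eqP => // -[].
Qed.

Lemma coef_z w : coef (zz K) w = zser 1 w.
Proof.
rewrite zserS zser0 /zz coefD !coef_mul_gen /zcoef.
case: w => [|a [|b [|c w]]] //; rewrite /= ?mul0r ?mulr1 //.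
by rewrite mulr0 !eqseq_cons /= !andbF addr0.
Qed.

Lemma coboundary_x3x3 : is_coboundary (dga_mul (x3 K) (x3 K)).
Proof.
apply/coboundaryE; exists (coef (x1 K)) => w; rewrite coef_mul_gen.
case: w => [|l1 [|l2 [|x w]]] //.
- by rewrite eqseq_cons /= andbF /= subr0 mulr0n.
- by rewrite /= /dfirst /x1 !coef_gen /=; have [->|[->|->]] := ord3_cases l1;
    have [->|[->|->]] := ord3_cases l2; simp01.
- rewrite (dcoef_homog (homog_coef _)) //.
  by rewrite !eqseq_cons /=; simp01.
Qed.

Lemma coboundary_x3z_comm :
  is_coboundary (dga_mul (x3 K) (zz K) - dga_mul (zz K) (x3 K)).
Proof.
apply/coboundaryE; exists (coef (dga_mul (x1 K) (x1 K))) => w.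
have [/eqP hw|hw] := boolP (size w == 3%N); last first.
  by rewrite (@coef_eq0 (1 + 2)) // (dcoef_homog (homog_coef _)).
have [a [b [c ->]]] : exists a b c, w = [:: a; b; c].
  by case: w hw => [|a [|b [|c [|x y]]]] //; exists a, b, c.
rewrite coefB (coef_mul (x3 K) (zz K)) (coef_mul (zz K) (x3 K)) !coef_z /=.
rewrite !zserS !zser0 !coef_gen /= /dfirst /lquot !coef_mul_gen /zcoef /=.
by have [->|[->|->]] := ord3_cases a; have [->|[->|->]] := ord3_cases b;
  have [->|[->|->]] := ord3_cases c; rewrite /= ?eqseq_cons /=; simp01; rewrite ?subrr.
Qed.

Lemma d_x3 : dga_d (x3 K) = 0.
Proof. by apply/cocycleE => w; rewrite (eq_dcoef w coef_x3) cocycle_x3zser. Qed.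

Lemma d_z : dga_d (zz K) = 0.
Proof. by apply/cocycleE => w; rewrite (eq_dcoef w coef_z) cocycle_zser. Qed.

Lemma cohomology_even k (c : cochain K k.*2) : dga_d c = 0 ->
  exists! lambda : K, is_coboundary (c - lambda *: zpow K k).
Proof.
move/cocycleE => dc; apply: exists_unique_class.
  exact: not_cobound_all _ zser_31 not_cobound_zser0 k.
exact: cohomologous_multiple 0 _ homog_zser cocycle_zser zser_31
  (fun c hc _ => cohomologous_multiple0 c hc) k _ (homog_coef c) dc.
Qed.

Lemma cohomology_odd k (c : cochain K k.*2.+1) : dga_d c = 0 ->
  exists! lambda : K, is_coboundary (c - lambda *: dga_mul (x3 K) (zpow K k)).
Proof.
move/cocycleE => dc; apply: exists_unique_class.
  exact: not_cobound_all _ x3zser_31 not_cobound_x3zser0 k.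
exact: cohomologous_multiple 1 _ homog_x3zser cocycle_x3zser x3zser_31
  cohomologous_multiple1 k _ (homog_coef c) dc.
Qed.

End FreeDGACohomology.

Theorem proposition2p1 (K : closedFieldType) (char0 : [pchar K] =i pred0) :
  dga_d (x3 K) = 0 /\ dga_d (zz K) = 0 /\
  is_coboundary (dga_mul (x3 K) (x3 K)) /\
  is_coboundary (dga_mul (x3 K) (zz K) - dga_mul (zz K) (x3 K)) /\
  (forall k : nat, dga_d (zpow K k) = 0 /\ dga_d (dga_mul (x3 K) (zpow K k)) = 0) /\
  (forall (k : nat) (c : cochain K k.*2), dga_d c = 0 ->
     exists! lambda : K, is_coboundary (c - lambda *: zpow K k)) /\
  (forall (k : nat) (c : cochain K (k.*2).+1), dga_d c = 0 ->
     exists! lambda : K, is_coboundary (c - lambda *: dga_mul (x3 K) (zpow K k))).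
Proof.
split; first exact: d_x3.
split; first exact: d_z.
split; first exact: coboundary_x3x3.
split; first exact: coboundary_x3z_comm.
split; first by move=> k; split; apply/cocycleE; [exact: cocycle_zser | exact: cocycle_x3zser].
split; [exact: cohomology_even | exact: cohomology_odd].
Qed.
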